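(* Let $\delta\le\frac14$ and let $\mathcal{I}$ be a $\delta$-ONI instance with $n$ agents and $|N^1_1|\le n\left(\frac14-\delta\right)/\left(\frac14+\frac\delta3\right)$. Then every agent $i\in N^1_2$ receives a bag of value at least $\left(\frac34+\delta\right)\mathrm{MMS}_i$ at the end of Algorithm $\mathtt{approxMMS1}(\mathcal{I},\delta)$.
   Context: Instance: agents $[n]$, goods $[m]$, additive valuations; goods with index larger than $m$ are dummy goods of value 0; $\mathrm{MMS}_i$ is the max over partitions of the goods into $n$ bundles of the minimum bundle value for $i$. Ordered: $v_i(1)\ge\dots\ge v_i(m)$ for all $i$. Normalized: every agent $i$ has an MMS partition with all $n$ bundles of value exactly 1 to $i$. $\alpha$-irreducible: for every $i$, $v_i(1)<\alpha$, $v_i(\{2n-1,2n,2n+1\})<\alpha$, $v_i(\{3n-2,\dots,3n+1\})<\alpha$, $v_i(\{1,2n+1\})<\alpha$. $\delta$-ONI: ordered, normalized, $(3/4+\delta)$-irreducible. $B_k=\{k,2n-k+1\}$ ($k\in[n]$); $N^1=\{i:v_i(B_k)\le1\ \forall k\}$; $N^1_1=\{i\in N^1:v_i(2n+1)\ge\frac14-5\delta\}$; $N^1_2=N^1\setminus N^1_1$. Algorithm $\mathtt{approxMMS1}(\mathcal{I},\delta)$: $\alpha=3/4+\delta$, bags $B_1,\dots,B_n$. Phase 1: while some unassigned agent $i$ and unassigned bag $B$ have $v_i(B)\ge\alpha$, assign such $B$ to an agent valuing it at least $\alpha$, choosing an agent of $N^1_1$ whenever one qualifies. Phase 2: process remaining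 bags one by one; for the current bag $B$, while no unassigned agent values it at least $\alpha$, add an arbitrary unused good with index $>2n$; then assign $B$ to an unassigned agent valuing it at least $\alpha$, preferring $N^1_1$. (If a good must be added but none is left, the algorithm stops.) *)

From HB Require Import structures.
From mathcomp Require Import all_boot all_order all_algebra.
Set Implicit Arguments. Unset Strict Implicit. Unset Printing Implicit Defensive.
Import Order.TTheory GRing.Theory Num.Theory.
Local Open Scope ring_scope.

Section Instance.
Variables (R : realFieldType) (n m : nat).

(* Goods are natural numbers with the paper's 1-based
   indexing: goods 1..m are real goods, every other index is a dummy good
   of value 0.  The valuation of agent i is [v i : nat -> R] (only its
   values on 1..m matter). *)
Variable v : 'I_n -> nat -> R.

Definition gval (i : 'I_n) (g : nat) : R :=
  if (0 < g <= m)%N then v i g else 0.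

(* additive value of a bag (bags are duplicate-free lists of goods) *)
Definition bval (i : 'I_n) (B : seq nat) : R := \sum_(g <- B) gval i g.

Definition nonneg_vals : Prop := forall i g, 0 <= v i g.

(* a partition of the goods [m] into n bundles: good o.+1 goes to bundle f o *)
Definition bundle_val (i : 'I_n) (f : {ffun 'I_m -> 'I_n}) (k : 'I_n) : R :=
  \sum_(o : 'I_m | f o == k) gval i o.+1.

(* minimum bundle value (the total value bval i (iota 1 m) is an upper bound
   of every bundle value, hence a neutral start for the min) *)
Definition min_bundle (i : 'I_n) (f : {ffun 'I_m -> 'I_n}) : R :=
  \big[Num.min/bval i (iota 1 m)]_(k : 'I_n) bundle_val i f k.

Definition MMS (i : 'I_n) : R :=
  \big[Num.max/0]_(f : {ffun 'I_m -> 'I_n}) min_bundle i f.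

Definition ordered : Prop :=
  forall i g g', (1 <= g)%N -> (g <= g')%N -> (g' <= m)%N -> gval i g' <= gval i g.

Definition normalized : Prop :=
  forall i, exists f : {ffun 'I_m -> 'I_n},
    min_bundle i f = MMS i /\ forall k, bundle_val i f k = 1.

Definition irreducible (alpha : R) : Prop :=
  forall i,
    [/\ gval i 1 < alpha,
        bval i [:: (2 * n - 1)%N; (2 * n)%N; (2 * n).+1] < alpha,
        bval i (iota (3 * n - 2) 4) < alpha
      & bval i [:: 1%N; (2 * n).+1] < alpha].

Definition alpha_of (delta : R) : R := 3 / 4 + delta.

Definition ONI (delta : R) : Prop :=
  [/\ ordered, normalized & irreducible (alpha_of delta)].

(* bag B_{k+1} = {k+1, 2n-(k+1)+1} for k : 'I_n *)
Definition Bk (k : 'I_n) : seq nat := [:: k.+1; (2 * n - k)%N].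

Definition inN1 (i : 'I_n) : bool := [forall k, bval i (Bk k) <= 1].

Definition N11 (delta : R) : {set 'I_n} :=
  [set i | inN1 i && (1 / 4 - 5 * delta <= gval i (2 * n).+1)].

Definition N12 (delta : R) : {set 'I_n} :=
  [set i | inN1 i && ~~ (1 / 4 - 5 * delta <= gval i (2 * n).+1)].

(* bags : contents of bag B_{k+1};  owner k = Some i : bag k assigned to agent i;
   phase2 : whether Phase 2 has started; cur : bag currently processed in Phase 2 *)
Record state := State {
  bags : 'I_n -> seq nat;
  owner : 'I_n -> option 'I_n;
  phase2 : bool;
  cur : option 'I_n }.

Definition init_state : state := State Bk (fun _ => None) false None.

Definition agent_free (s : state) (i : 'I_n) : Prop := forall k, owner s k <> Some i.

Definition unused (s : state) (g : nat) : Prop :=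
  (2 * n < g <= m)%N /\ forall k, g \notin bags s k.

Definition pref (delta : R) (s : state) (B : seq nat) (i : 'I_n) : Prop :=
  i \in N11 delta \/
  ~ (exists j, [/\ j \in N11 delta, agent_free s j & alpha_of delta <= bval j B]).

Definition assign (o : 'I_n -> option 'I_n) (k i : 'I_n) : 'I_n -> option 'I_n :=
  fun k' => if k' == k then Some i else o k'.

Definition add_good (b : 'I_n -> seq nat) (k : 'I_n) (g : nat) : 'I_n -> seq nat :=
  fun k' => if k' == k then rcons (b k) g else b k'.

Inductive step (delta : R) : state -> state -> Prop :=
| p1_assign s k i :
    ~~ phase2 s -> owner s k = None -> agent_free s i ->
    alpha_of delta <= bval i (bags s k) -> pref delta s (bags s k) i ->
    step delta s (State (bags s) (assign (owner s) k i) false None)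
| p1_end s :
    ~~ phase2 s ->
    (forall k i, owner s k = None -> agent_free s i -> bval i (bags s k) < alpha_of delta) ->
    step delta s (State (bags s) (owner s) true None)
| p2_select s k :
    phase2 s -> cur s = None -> owner s k = None ->
    step delta s (State (bags s) (owner s) true (Some k))
| p2_add s k g :
    phase2 s -> cur s = Some k ->
    (forall i, agent_free s i -> bval i (bags s k) < alpha_of delta) ->
    unused s g ->
    step delta s (State (add_good (bags s) k g) (owner s) true (Some k))
| p2_assign s k i :
    phase2 s -> cur s = Some k -> agent_free s i ->
    alpha_of delta <= bval i (bags s k) -> pref delta s (bags s k) i ->
    step delta s (State (bags s) (assign (owner s) k i) true None).

Inductive reach (delta : R) : state -> state -> Prop :=
| reach_refl s : reach delta s s
| reach_step s s' s'' : step delta s s' -> reach delta s' s'' -> reach delta s s''.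

(* the algorithm has ended (normally, or stopped because no good was left) *)
Definition final (delta : R) (s : state) : Prop := forall s', ~ step delta s s'.

End Instance.

From HB Require Import structures.
From mathcomp Require Import all_boot all_order all_algebra.
From mathcomp Require Import zify lra.
From Stdlib Require Import Classical.

Set Implicit Arguments.
Unset Strict Implicit.
Unset Printing Implicit Defensive.

Import Order.TTheory GRing.Theory Num.Theory.
Local Open Scope ring_scope.

(* Fix i in N^1_2; normalization gives MMS_i = 1.  Since i is in N^1, every
   initial bag is worth at most 1 to i, and this persists while i is unassigned:
   Phase 2 only extends a bag that i values below alpha, by a good of index > 2n,
   worth at most 1 - alpha to i (irreducibility and the definition of N^1_2).
   If the algorithm ended with i unassigned, either every bag is owned, which
   the injectivity of ownership forbids, or Phase 2 got stuck on a bag worth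
   less than alpha <= 1 to i for lack of goods; then the n bags contain all
   goods, worth n to i by normalization, yet their values to i sum to less
   than n.  So i owns a bag, worth at least alpha to i. *)

Lemma uniq_sub_ler_psum (R : numDomainType) (T : eqType) (f : T -> R) (s t : seq T) :
  (forall x, 0 <= f x) -> uniq s -> {subset s <= t} ->
  \sum_(x <- s) f x <= \sum_(x <- t) f x.
Proof.
move=> f_ge0; elim: t s => [|y t IHt] s s_uniq s_sub.
  by case: s s_sub {s_uniq} => // x s /(_ x); rewrite mem_head => /(_ isT).
rewrite (bigID (pred1 y)) big_cons /=; apply: lerD.
  have [ys|yNs] := boolP (y \in s).
    by rewrite -big_filter filter_pred1_uniq // big_seq1.
  by rewrite big1_seq // => x /andP[/eqP-> /negPn]; rewrite (negPf yNs).
rewrite -big_filter; apply: IHt; first exact: filter_uniq.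
move=> x; rewrite mem_filter => /andP[xNy /s_sub].
by rewrite inE (negPf xNy).
Qed.

Lemma big_min_const (R : realDomainType) (I : finType) (c x : R) :
  (0 < #|I|)%N -> c <= x -> \big[Num.min/x]_(k : I) c = c.
Proof.
rewrite big_const; case: #|I| => // p _ cx.
by elim: p => [|p IHp]; rewrite iterS ?IHp min_l.
Qed.

Lemma some_injective_onto (T : finType) (o : T -> option T) :
  (forall k1 k2 j, o k1 = Some j -> o k2 = Some j -> k1 = k2) ->
  (forall k, o k <> None) -> forall j, exists k, o k = Some j.
Proof.
move=> o_inj o_some j.
have o_val k : o k = Some (odflt j (o k)) by case: (o k) (o_some k).
pose f k := odflt j (o k).
have f_inj : injective f.
  by move=> k1 k2 e; apply: (o_inj _ _ (f k2)); [rewrite -e|]; exact: o_val.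
have [g _ gK] := injF_bij f_inj.
by exists (g j); rewrite o_val -/(f _) gK.
Qed.

Section Valuations.
Variables (R : realFieldType) (n m : nat) (v : 'I_n -> nat -> R).
Hypothesis v_ge0 : nonneg_vals v.

Lemma gval_ge0 i g : 0 <= gval m v i g.
Proof. by rewrite /gval; case: ifP. Qed.

Lemma bval_rcons i B g : bval m v i (rcons B g) = bval m v i B + gval m v i g.
Proof. by rewrite /bval big_rcons. Qed.

Lemma bval_goods i : bval m v i (iota 1 m) = \sum_(o : 'I_m) gval m v i o.+1.
Proof.
rewrite /bval -[1%N]addn0 (iotaDl 1 0) -val_enum_ord -map_comp big_map big_enum.
by apply: eq_bigl => o; rewrite inE.
Qed.

Lemma normalized_bval_goods i : normalized m v -> bval m v i (iota 1 m) = n%:R.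
Proof.
move=> /(_ i) [f [_ f_bundles]].
rewrite bval_goods (partition_big f predT) //=.
by rewrite (eq_bigr (fun=> 1)) ?sumr_const ?card_ord // => k _; apply: f_bundles.
Qed.

Lemma normalized_MMS i : normalized m v -> MMS m v i = 1.
Proof.
move=> vN; have [f [<- f_bundles]] := vN i.
have n_gt0 : (0 < n)%N := leq_ltn_trans (leq0n i) (ltn_ord i).
rewrite /min_bundle (eq_bigr (fun=> 1)) // big_min_const ?card_ord //.
by rewrite normalized_bval_goods // ler1n.
Qed.

Lemma goods_le_sum_bags (I : finType) (b : I -> seq nat) i :
  (forall g, (0 < g <= m)%N -> exists k, g \in b k) ->
  bval m v i (iota 1 m) <= \sum_k bval m v i (b k).
Proof.
move=> b_cover.
have -> : \sum_k bval m v i (b k) = bval m v i (flatten [seq b k | k <- enum I]).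
  by rewrite /bval big_flatten big_map big_enum.
apply: uniq_sub_ler_psum; [exact: gval_ge0 | exact: iota_uniq |].
move=> g; rewrite mem_iota => /andP[g_gt0 g_le].
have [k gk] := b_cover g ltac:(lia).
by apply/flatten_mapP; exists k; rewrite ?mem_enum.
Qed.

End Valuations.

Section ApproxMMS1.
Variables (R : realFieldType) (n m : nat) (v : 'I_n -> nat -> R) (delta : R).
Variable i : 'I_n.
Hypotheses (v_ge0 : nonneg_vals v) (vONI : ONI m v delta) (i_N12 : i \in N12 m v delta).

Local Notation alpha := (alpha_of delta).
Local Notation gval := (gval m v).
Local Notation bval := (bval m v).
Local Notation step := (step m v delta).

(* Irreducibility bounds the good 2n+1 by (1/4 + delta/3), the definition of
   N^1_2 by (1/4 - 5 delta): the smaller of the two is at most 1 - alpha. *)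
Lemma late_good_le g : (2 * n < g <= m)%N -> gval i g <= 1 - alpha.
Proof.
move=> /andP[g_gt g_le]; have [v_ord _ v_irr] := vONI.
have n_gt0 : (0 < n)%N := leq_ltn_trans (leq0n i) (ltn_ord i).
have v_g_le := v_ord i (2 * n).+1 g isT g_gt g_le.
have v2n_small : gval i (2 * n).+1 < 1 / 4 - 5 * delta.
  by move: i_N12; rewrite inE ltNge => /andP[].
have [_ + _ _] := v_irr i; rewrite /bval !big_cons big_nil addr0 => triple_small.
have := v_ord i (2 * n - 1)%N (2 * n)%N ltac:(lia) ltac:(lia) ltac:(lia).
have := v_ord i (2 * n)%N (2 * n).+1 ltac:(lia) ltac:(lia) ltac:(lia).
rewrite /alpha_of in triple_small * => v_2n_le v_2n1_le.
by case: (lerP 0 delta) => delta_sign; lra.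
Qed.

Record invariant (s : state n) : Prop := Invariant {
  inv_cover : forall g, (0 < g <= 2 * n)%N -> exists k, g \in bags s k;
  inv_owner_inj : forall k1 k2 j, owner s k1 = Some j -> owner s k2 = Some j -> k1 = k2;
  inv_cur_unowned : forall k, cur s = Some k -> owner s k = None;
  inv_owned_ge : forall k j, owner s k = Some j -> alpha <= bval j (bags s k);
  inv_free_le1 : agent_free s i -> forall k, bval i (bags s k) <= 1 }.

Lemma invariant_init : invariant (init_state n).
Proof.
split=> //= [g /andP[g_gt0 g_le]|_ k].
  case: (leqP g n) => [g_le_n|g_gt_n].
    have k_lt : (g.-1 < n)%N by lia.
    by exists (Ordinal k_lt); rewrite inE prednK ?eqxx.
  have k_lt : (2 * n - g < n)%N by lia.
  by exists (Ordinal k_lt); rewrite !inE; apply/orP; right; apply/eqP => /=; lia.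
by move: i_N12; rewrite inE => /andP[/forallP].
Qed.

Lemma invariant_assign s k j ph : invariant s -> owner s k = None -> agent_free s j ->
  alpha <= bval j (bags s k) -> invariant (State (bags s) (assign (owner s) k j) ph None).
Proof.
case=> s_cover s_inj _ s_owned s_free k_unowned j_free j_ge.
split=> //= [k1 k2 j'|k' j'|i_free k'].
- rewrite /assign; case: eqVneq => [->|_]; case: eqVneq => [->|_] //.
  + by move=> [<-] /j_free.
  + by move=> + [j_eq]; rewrite -j_eq => /j_free.
  + exact: s_inj.
- by rewrite /assign; case: (eqVneq k' k) => [-> [<-] //|_]; apply: s_owned.
- apply: s_free => k2 owner_k2; have := i_free k2; rewrite /= /assign.
  by case: (eqVneq k2 k) => [eq_k2|_]; [rewrite -eq_k2 owner_k2 in k_unowned|apply].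
Qed.

Lemma invariant_add_good s k g : invariant s -> cur s = Some k ->
  (forall j, agent_free s j -> bval j (bags s k) < alpha) -> unused m s g ->
  invariant (State (add_good (bags s) k g) (owner s) true (Some k)).
Proof.
case=> s_cover s_inj s_cur s_owned s_free cur_k k_lt [g_late _].
have k_unowned := s_cur k cur_k; rewrite /add_good.
split=> //= [g' /s_cover[k' g'_in]|_ [<-] //|k' j|i_free k'].
- exists k'; case: (eqVneq k' k) => [<-|_] //.
  by rewrite mem_rcons inE g'_in orbT.
- by case: (eqVneq k' k) => [->|_]; [rewrite k_unowned | apply: s_owned].
- case: (eqVneq k' k) => [_|_]; last exact: (s_free i_free).
  have := k_lt i i_free; have := late_good_le g_late.
  by rewrite bval_rcons; lra.
Qed.

Lemma invariant_step s s' : step s s' -> invariant s -> invariant s'.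
Proof.
case=> {s s'} [s k j _ k_unowned j_free j_ge _ s_inv|s _ _ []|s k _ _ k_unowned []|
  s k g _ cur_k k_lt g_unused s_inv|s k j _ cur_k j_free j_ge _ s_inv].
- exact: invariant_assign.
- by split.
- by split=> // k' [<-].
- exact: invariant_add_good.
- by apply: invariant_assign => //; apply: inv_cur_unowned cur_k.
Qed.

Lemma invariant_reach s s' : reach m v delta s s' -> invariant s -> invariant s'.
Proof. by elim=> // s0 s1 s2 /invariant_step step_inv _ IH /step_inv. Qed.

Lemma reachable_invariant s : reach m v delta (init_state n) s -> invariant s.
Proof. by move/invariant_reach; apply; apply: invariant_init. Qed.

Lemma exists_pref_agent s B j : agent_free s j -> alpha <= bval j B ->
  exists j', [/\ agent_free s j', alpha <= bval j' B & pref m v delta s B j'].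
Proof.
move=> j_free j_ge.
have [[j' [j'_N11 j'_free j'_ge]]|no_N11] := classic
  (exists j', [/\ j' \in N11 m v delta, agent_free s j' & alpha <= bval j' B]).
  by exists j'; split=> //; left.
by exists j; split=> //; right.
Qed.

Lemma final_phase2 s : final m v delta s -> phase2 s.
Proof.
move=> s_final; apply/negPn/negP => s_phase1.
have [[k [j [k_unowned j_free j_ge]]]|no_assign] := classic
  (exists k j, [/\ owner s k = None, agent_free s j & alpha <= bval j (bags s k)]).
  have [j' [j'_free j'_ge j'_pref]] := exists_pref_agent j_free j_ge.
  exact: s_final _ (p1_assign s_phase1 k_unowned j'_free j'_ge j'_pref).
apply: s_final _ (p1_end s_phase1 _) => k j k_unowned j_free.
by rewrite ltNge; apply/negP => j_ge; apply: no_assign; exists k, j.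
Qed.

Lemma sum_bags_ge_n s : invariant s -> (forall g, ~ unused m s g) ->
  n%:R <= \sum_k bval i (bags s k).
Proof.
move=> s_inv no_unused.
have <- : bval i (iota 1 m) = n%:R by apply: normalized_bval_goods; case: vONI.
apply: goods_le_sum_bags => // g /andP[g_gt0 g_le].
case: (leqP g (2 * n)) => [g_early|g_late]; first by apply: inv_cover; rewrite ?g_gt0.
apply: NNPP => g_nowhere; apply: (no_unused g); split; first by rewrite g_late.
by move=> k; apply/negP => g_in; apply: g_nowhere; exists k.
Qed.

Hypothesis alpha_le1 : alpha <= 1.

Lemma sum_bags_lt_n s k : invariant s -> agent_free s i -> bval i (bags s k) < alpha ->
  \sum_k' bval i (bags s k') < n%:R.
Proof.
move=> s_inv i_free k_lt.
rewrite -[n in n%:R]card_ord -sumr_const (bigD1 k) //= [ltRHS](bigD1 k) //=.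
apply: ltr_leD; first exact: lt_le_trans k_lt alpha_le1.
by apply: ler_sum => k' _; apply: inv_free_le1.
Qed.

Lemma final_cur_none s :
  invariant s -> final m v delta s -> agent_free s i -> cur s = None.
Proof.
move=> s_inv s_final i_free; have s_phase2 := final_phase2 s_final.
case cur_k: (cur s) => [k|] //; exfalso.
have [[j [j_free j_ge]]|no_taker] :=
  classic (exists j, agent_free s j /\ alpha <= bval j (bags s k)).
  have [j' [j'_free j'_ge j'_pref]] := exists_pref_agent j_free j_ge.
  exact: s_final _ (p2_assign s_phase2 cur_k j'_free j'_ge j'_pref).
have k_lt j : agent_free s j -> bval j (bags s k) < alpha.
  by move=> j_free; rewrite ltNge; apply/negP => j_ge; apply: no_taker; exists j.
have [[g g_unused]|no_unused] := classic (exists g, unused m s g).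
  exact: s_final _ (p2_add s_phase2 cur_k k_lt g_unused).
have := sum_bags_lt_n s_inv i_free (k_lt i i_free).
by rewrite ltNge sum_bags_ge_n // => g g_unused; apply: no_unused; exists g.
Qed.

Lemma final_owned s : final m v delta s -> cur s = None -> forall k, owner s k <> None.
Proof.
move=> s_final cur_none k k_unowned.
exact: s_final _ (p2_select m v delta (final_phase2 s_final) cur_none k_unowned).
Qed.

Lemma final_agent_assigned s : reach m v delta (init_state n) s -> final m v delta s ->
  exists k, owner s k = Some i.
Proof.
move=> s_reach s_final; have s_inv := reachable_invariant s_reach.
apply: NNPP => i_unassigned.
have i_free : agent_free s i by move=> k owner_k; apply: i_unassigned; exists k.
have owned := final_owned s_final (final_cur_none s_inv s_final i_free).
have [k owner_k] := some_injective_onto (inv_owner_inj s_inv) owned i.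
exact: i_free owner_k.
Qed.

End ApproxMMS1.

Theorem lemma23 (R : realFieldType) (n m : nat) (v : 'I_n -> nat -> R) (delta : R) :
  delta <= 1 / 4 ->
  nonneg_vals v ->
  ONI m v delta ->
  (#|N11 m v delta|%:R <= n%:R * (1 / 4 - delta) / (1 / 4 + delta / 3)) ->
  forall s : state n,
    reach m v delta (init_state n) s -> final m v delta s ->
    forall i, i \in N12 m v delta ->
      exists k, owner s k = Some i /\
                alpha_of delta * MMS m v i <= bval m v i (bags s k).
Proof.
move=> delta_le v_ge0 vONI _ s s_reach s_final i i_N12.
have alpha_le1 : alpha_of delta <= 1 by rewrite /alpha_of; lra.
have [k owner_k] := final_agent_assigned v_ge0 vONI i_N12 alpha_le1 s_reach s_final.
exists k; split=> //.
have [_ v_normalized _] := vONI.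
rewrite normalized_MMS // mulr1.
exact: (inv_owned_ge (reachable_invariant vONI i_N12 s_reach) owner_k).
Qed.
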